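(* Let $A$ be a finite alphabet. A language $L\subseteq A^*$ is definable by a sentence of $FO^2[<,\mathrm{Inv}]$ if and only if it is definable by a sentence of $FO^2[<,\mathrm{Th}]$. That is, as language classes, $FO^2[<,\mathrm{Inv}]=FO^2[<,\mathrm{Th}]$.
   Context: Words $w\in A^*$ are finite structures whose universe is the set of positions $\{1,\dots,|w|\}$; $w(i)$ denotes the $i$-th letter. For each $a\in A$ there is a unary predicate $a(x)$, true iff the letter at position $x$ is $a$, and the order $<$ on positions. A sentence $\phi$ defines the language $\{w\in A^*: w\models\phi\}$; formulas may be interpreted in the empty word, where every existentially quantified sentence is false and every universally quantified one is true. For $a\in A$, the binary ''between'' predicate $a(x,y)$ means $\exists z\,(x<z\wedge z<y\wedge a(z))$, i.e. the letter $a$ occurs strictly between positions $x$ and $y$. $FO^2[<,\mathrm{Inv}]$ is the set of first-order formulas built from $<$, the unary predicates $a(x)$ and the binary predicates $a(x,y)$ ($a\in A$) using only two variables (which may be reused). For $a\in A$ and $k\ge 0$, the predicate $(a,k)(x,y)$ means that $x<y$ and there are at least $k$ positions $z$ with $x<z<y$ and $w(z)=a$. $FO^2[<,\mathrm{Th}]$ is the two-variable logic built from $<$, the unary predicates $a(x)$, and all predicates $(a,k)(x,y)$ ($a\in A$, $k\ge 0$). *)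

From mathcomp Require Import all_boot.
Set Implicit Arguments. Unset Strict Implicit. Unset Printing Implicit Defensive.

(* Positions are the indices 0 .. size w - 1 (a shift by one of the paper's
   1 .. |w|, irrelevant for definability). *)

(* The two variables of the logic: [false] = x, [true] = y. *)
Definition var := bool.

Definition valuation := var -> nat.
Definition upd (nu : valuation) (v : var) (i : nat) : valuation :=
  fun u => if u == v then i else nu u.

Definition count_between {A : eqType} (w : seq A) (a : A) (i j : nat) : nat :=
  count (fun z => (i < z < j) && (onth w z == Some a)) (iota 0 (size w)).

Inductive fo2inv (A : Type) : Type :=
  | IFalse
  | IEq of var & var
  | ILt of var & var
  | ILetter of A & var
  | IBetween of A & var & var
  | INot of fo2inv A
  | IOr of fo2inv A & fo2inv A
  | IEx of var & fo2inv A.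

Fixpoint sat_inv {A : eqType} (w : seq A) (nu : valuation) (f : fo2inv A) : Prop :=
  match f with
  | IFalse => False
  | IEq u v => nu u = nu v
  | ILt u v => nu u < nu v
  | ILetter a u => onth w (nu u) = Some a
  | IBetween a u v => exists z, nu u < z < nu v /\ onth w z = Some a
  | INot g => ~ sat_inv w nu g
  | IOr g h => sat_inv w nu g \/ sat_inv w nu h
  | IEx v g => exists i, i < size w /\ sat_inv w (upd nu v i) g
  end.

Fixpoint free_inv {A : Type} (f : fo2inv A) (v : var) : bool :=
  match f with
  | IFalse => false
  | IEq u1 u2 | ILt u1 u2 | IBetween _ u1 u2 => (v == u1) || (v == u2)
  | ILetter _ u => v == u
  | INot g => free_inv g v
  | IOr g h => free_inv g v || free_inv h v
  | IEx u g => (v != u) && free_inv g v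
  end.

Definition sentence_inv {A : Type} (f : fo2inv A) : Prop :=
  forall v, free_inv f v = false.

Inductive fo2th (A : Type) : Type :=
  | TFalse
  | TEq of var & var
  | TLt of var & var
  | TLetter of A & var
  | TThr of A & nat & var & var
  | TNot of fo2th A
  | TOr of fo2th A & fo2th A
  | TEx of var & fo2th A.

Fixpoint sat_th {A : eqType} (w : seq A) (nu : valuation) (f : fo2th A) : Prop :=
  match f with
  | TFalse => False
  | TEq u v => nu u = nu v
  | TLt u v => nu u < nu v
  | TLetter a u => onth w (nu u) = Some a
  | TThr a k u v => nu u < nu v /\ k <= count_between w a (nu u) (nu v)
  | TNot g => ~ sat_th w nu g
  | TOr g h => sat_th w nu g \/ sat_th w nu h
  | TEx v g => exists i, i < size w /\ sat_th w (upd nu v i) g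
  end.

Fixpoint free_th {A : Type} (f : fo2th A) (v : var) : bool :=
  match f with
  | TFalse => false
  | TEq u1 u2 | TLt u1 u2 | TThr _ _ u1 u2 => (v == u1) || (v == u2)
  | TLetter _ u => v == u
  | TNot g => free_th g v
  | TOr g h => free_th g v || free_th h v
  | TEx u g => (v != u) && free_th g v
  end.

Definition sentence_th {A : Type} (f : fo2th A) : Prop :=
  forall v, free_th f v = false.

(* Language defined by a sentence (valuation irrelevant for sentences). *)
Definition nu0 : valuation := fun _ => 0.

Definition inv_definable {A : finType} (L : seq A -> Prop) : Prop :=
  exists f : fo2inv A, sentence_inv f /\ forall w, L w <-> sat_inv w nu0 f.

Definition th_definable {A : finType} (L : seq A -> Prop) : Prop :=
  exists f : fo2th A, sentence_th f /\ forall w, L w <-> sat_th w nu0 f.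

From mathcomp Require Import all_boot zify.
From Stdlib Require Import Classical.

Set Implicit Arguments.
Unset Strict Implicit.

(** FO2[<,Inv] is contained in FO2[<,Th] since a(x,y) is (a,1)(x,y).
  Conversely, the quantifiers of an FO2[<,Th] formula are eliminated innermost
  first.  Call a mix a quantifier-free combination of order atoms, threshold
  atoms and FO2[<,Inv] properties of x or of y; the point is to express
  "exists y, beta(y) /\ m(x,y)" in FO2[<,Inv].  Shannon expansion removes the
  unary atoms one at a time, moving those on x in front of the quantifier and
  those on y into the guard beta.  Without them, m(x,y) only depends on the
  relative order of x and y and on the number of occurrences of each letter
  between them, capped at the largest threshold K of m.  For each of these
  finitely many profiles, "some y satisfying beta has this profile" is
  expressible with two variables: walk from x towards y, always jumping to the
  nearest occurrence of a letter whose count is not yet settled, and swap the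
  roles of the variables at each jump; at most |A| K jumps are needed. *)

Definition ITrue {A} : fo2inv A := INot (IFalse A).
Definition IAnd {A} (f g : fo2inv A) : fo2inv A := INot (IOr (INot f) (INot g)).
Definition IOrs {A T} (s : seq T) (F : T -> fo2inv A) : fo2inv A :=
  foldr (fun t g => IOr (F t) g) (IFalse A) s.
Definition IAnds {A T} (s : seq T) (F : T -> fo2inv A) : fo2inv A :=
  foldr (fun t g => IAnd (F t) g) ITrue s.
Definition IAt {A} (c : var) (f : fo2inv A) : fo2inv A :=
  IEx (~~ c) (IAnd (IEq A false true) f).

Lemma upd_eq nu v i : upd nu v i v = i.
Proof. by rewrite /upd eqxx. Qed.

Lemma updN nu v i : upd nu v i (~~ v) = nu (~~ v).
Proof. by rewrite /upd; case: v. Qed.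

Lemma updNv nu v i : upd nu (~~ v) i v = nu v.
Proof. by rewrite /upd; case: v. Qed.

Section InvSemantics.
Variables (A : eqType) (w : seq A).
Implicit Types (nu : valuation) (f g : fo2inv A).

Lemma sat_IAnd nu f g :
  sat_inv w nu (IAnd f g) <-> sat_inv w nu f /\ sat_inv w nu g.
Proof.
by rewrite /IAnd /=; split=> [H|]; [split; apply: NNPP; tauto | tauto].
Qed.

Lemma sat_IOrs (T : eqType) nu (s : seq T) F :
  sat_inv w nu (IOrs s F) <-> exists2 t, t \in s & sat_inv w nu (F t).
Proof.
elim: s => [|t s IH] /=; first by split=> // -[].
rewrite IH; split=> [[H|[u su H]]|[u]]; first by exists t; rewrite ?mem_head.
  by exists u; rewrite // inE su orbT.
by rewrite inE => /orP[/eqP-> | su] H; [left | right; exists u].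
Qed.

Lemma sat_IAnds (T : eqType) nu (s : seq T) F :
  sat_inv w nu (IAnds s F) <-> forall t, t \in s -> sat_inv w nu (F t).
Proof.
elim: s => [|t s IH]; first by split=> //= _ [].
rewrite -[IAnds _ _]/(IAnd (F t) (IAnds s F)) sat_IAnd IH; split=> [[Ht Hs] u|H].
  by rewrite inE => /orP[/eqP-> | /Hs].
by split=> [|u su]; apply: H; rewrite inE ?eqxx ?su ?orbT.
Qed.

Lemma sat_IEx nu v f :
  sat_inv w nu (IEx v f) <-> exists i, i < size w /\ sat_inv w (upd nu v i) f.
Proof. by []. Qed.

Lemma sat_INot nu f : sat_inv w nu (INot f) <-> ~ sat_inv w nu f.
Proof. by []. Qed.

Lemma sat_IOr nu f g :
  sat_inv w nu (IOr f g) <-> sat_inv w nu f \/ sat_inv w nu g.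
Proof. by []. Qed.

Lemma eq_sat_inv f nu nu' : nu =1 nu' -> sat_inv w nu f <-> sat_inv w nu' f.
Proof.
elim: f nu nu' => [|u v|u v|a u|a u v|g IH|g IHg h IHh|v g IH] nu nu' E /=;
  rewrite ?E //.
- by have := IH _ _ E; tauto.
- by have := IHg _ _ E; have := IHh _ _ E; tauto.
- have Eu i : upd nu v i =1 upd nu' v i by move=> u; rewrite /upd E.
  by split=> -[i [Hi H]]; exists i; split=> //;
    [apply/(IH _ _ (Eu i)) | apply/(IH _ _ (Eu i))].
Qed.

Lemma sat_IAt nu c f :
  sat_inv w nu (IAt c f) <-> nu c < size w /\ sat_inv w (fun=> nu c) f.
Proof.
have Ec j : upd nu (~~ c) j false = upd nu (~~ c) j true <-> j = nu c.
  by rewrite /upd; case: c => /=; split=> ->.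
have Eu : upd nu (~~ c) (nu c) =1 fun=> nu c.
  by move=> u; rewrite /upd; case: u; case: c {Ec}.
rewrite /IAt sat_IEx; split=> [[j [Hj /sat_IAnd[/Ec Ej H]]]|[Hc H]].
  by subst j; split=> //; apply/(eq_sat_inv _ Eu).
exists (nu c); split=> //; apply/sat_IAnd; split; first exact/Ec.
exact/(eq_sat_inv _ Eu).
Qed.

End InvSemantics.

Lemma count_add3 T (p p1 p2 p3 : pred T) s :
  (forall z, p z = p1 z + p2 z + p3 z :> nat) ->
  count p s = count p1 s + count p2 s + count p3 s.
Proof. by move=> H; elim: s => //= z s ->; rewrite H; lia. Qed.

Lemma onth_size T (s : seq T) i x : onth s i = Some x -> i < size s.
Proof. by rewrite -onthTE => ->. Qed.

Section CountBetween.
Variables (A : eqType) (w : seq A) (a : A).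

Lemma count_betweenP i j :
  reflect (exists z, i < z < j /\ onth w z = Some a) (0 < count_between w a i j).
Proof.
rewrite /count_between -has_count.
apply: (iffP hasP) => [[z _ /andP[Hz /eqP Ha]] | [z [Hz Ha]]]; first by exists z.
by exists z; [rewrite mem_iota add0n (onth_size Ha) | rewrite Hz Ha eqxx].
Qed.

Lemma count_between_self i : count_between w a i i = 0.
Proof.
by apply/eqP; rewrite -leqn0 leqNgt; apply/count_betweenP => -[z [/andP[]]]; lia.
Qed.

Lemma count_between_split i q j : i < q -> q < j ->
  count_between w a i j =
  count_between w a i q + (onth w q == Some a) + count_between w a q j.
Proof.
move=> iq qj; rewrite /count_between.
have -> : (onth w q == Some a) = count (fun z => (z == q) && (onth w z == Some a))
                                       (iota 0 (size w)) :> nat.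
  rewrite (eq_count (a2 := fun z => (onth w q == Some a) && (z == q))).
    case: (onth w q =P Some a) => [Hq|]; last by rewrite count_pred0.
    rewrite (eq_count (a2 := pred1 q)) // count_uniq_mem ?iota_uniq //.
    by rewrite mem_iota add0n (onth_size Hq).
  by move=> z /=; case: eqP => [->|]; rewrite ?andbT ?andbF.
apply: count_add3 => z; case: (onth w z == Some a); rewrite ?andbT ?andbF //.
by case: (ltngtP z q) => [zq|qz|->] /=; lia.
Qed.

End CountBetween.

Definition ltd (d : bool) (i j : nat) : bool := if d then i < j else j < i.

Definition count_dir {A : eqType} (w : seq A) d a i j : nat :=
  if d then count_between w a i j else count_between w a j i.

Lemma ltd_trans d i q j : ltd d i q -> ltd d q j -> ltd d i j.
Proof. by case: d => /=; lia. Qed.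

Lemma ltd_nearest d i j (P : pred nat) :
  (exists z, [&& ltd d i z, ltd d z j & P z]) ->
  exists q, [/\ ltd d i q, ltd d q j, P q &
    forall z, ltd d i z -> ltd d z q -> ~~ P z].
Proof.
case: d => ex.
- case: (ex_minnP ex) => q /and3P[iq qj Pq] qmin.
  exists q; split=> // z /= iz zq; apply/negP => Pz.
  by have := qmin z; rewrite /= iz Pz (ltn_trans zq qj) leqNgt zq => /(_ isT).
- have ub z : [&& ltd false i z, ltd false z j & P z] -> z <= i.
    by case/and3P => /ltnW.
  case: (ex_maxnP ex ub) => q /and3P[iq qj Pq] qmax.
  exists q; split=> // z /= iz zq; apply/negP => Pz.
  by have := qmax z; rewrite /= iz Pz (ltn_trans qj zq) leqNgt zq => /(_ isT).
Qed.

Section CountDir.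
Variables (A : eqType) (w : seq A) (d : bool) (a : A).

Lemma count_dirP i j :
  reflect (exists z, [/\ ltd d i z, ltd d z j & onth w z = Some a])
          (0 < count_dir w d a i j).
Proof.
rewrite /count_dir /ltd; case: d; apply: (iffP (count_betweenP _ _ _ _)).
- by move=> [z [/andP[iz zj] Hz]]; exists z.
- by move=> [z [iz zj Hz]]; exists z; rewrite iz zj.
- by move=> [z [/andP[jz zi] Hz]]; exists z.
- by move=> [z [zi jz Hz]]; exists z; rewrite jz zi.
Qed.

Lemma count_dir_split i q j : ltd d i q -> ltd d q j ->
  count_dir w d a i j =
  count_dir w d a i q + (onth w q == Some a) + count_dir w d a q j.
Proof.
rewrite /count_dir /ltd; case: d => iq qj; first exact: count_between_split.
by rewrite (count_between_split _ _ qj iq); lia.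
Qed.

End CountDir.

Section Walk.
Variables (A : finType) (capped : pred A) (beta : fo2inv A) (d : bool).

Definition ILtd (c c' : var) : fo2inv A := if d then ILt A c c' else ILt A c' c.

Definition IBetweend a (c c' : var) : fo2inv A :=
  if d then IBetween a c c' else IBetween a c' c.

Definition watched (e : A -> nat) a := (0 < e a) || ~~ capped a.

Definition INoWatched e c c' : fo2inv A :=
  IAnds [seq a <- enum A | watched e a] (fun a => INot (IBetweend a c c')).

Definition decr (e : A -> nat) a : A -> nat :=
  fun b => if b == a then (e b).-1 else e b.

Definition IStop e c : fo2inv A :=
  if [forall a, e a == 0] then
    IEx (~~ c) (IAnd (ILtd c (~~ c))
      (IAnd (INoWatched e c (~~ c)) (IAt (~~ c) beta)))
  else IFalse A.

(* A capped letter a must occur at least e a times before the target, any other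
   letter exactly e a times.  A letter is watched while it may not be skipped: it
   is still owed, or it is uncapped.  Each step jumps to the nearest watched
   letter, which must then be owed, and pays one occurrence of it. *)
Fixpoint IWalk n e c : fo2inv A :=
  if n is n'.+1 then
    IOr (IStop e c) (IOrs [seq a <- enum A | 0 < e a] (fun a =>
      IEx (~~ c) (IAnd (ILtd c (~~ c)) (IAnd (ILetter a (~~ c))
        (IAnd (INoWatched e c (~~ c)) (IWalk n' (decr e a) (~~ c)))))))
  else IStop e c.

Definition fulfils (e cnt : A -> nat) :=
  forall a, if capped a then e a <= cnt a else cnt a == e a.

Definition reachable (w : seq A) e i := exists j, [/\ j < size w, ltd d i j,
  sat_inv w (fun=> j) beta & fulfils e (fun a => count_dir w d a i j)].

Lemma sum_decr e a : 0 < e a -> (\sum_b decr e a b).+1 = \sum_b e b.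
Proof.
move=> ea; rewrite (bigD1 a) // [in RHS](bigD1 a) //= /decr eqxx.
by rewrite (eq_bigr e) => [|b /negbTE -> //]; rewrite -addSn prednK.
Qed.

Lemma fulfils_decr e a cij cqj : 0 < e a ->
  (forall b, watched e b -> cij b = (b == a) + cqj b) ->
  fulfils e cij <-> fulfils (decr e a) cqj.
Proof.
move=> ea Hc.
suff Hb b : (if capped b then e b <= cij b else cij b == e b) =
            (if capped b then decr e a b <= cqj b else cqj b == decr e a b).
  by split=> H b; [rewrite -Hb | rewrite Hb]; apply: H.
rewrite /decr; case: (boolP (watched e b)) => [/Hc ->|].
  by case: eqVneq => [->|_] /=; case: (capped _); lia.
rewrite negb_or lt0n !negbK => /andP[/eqP eb0 cb].
have ba : b != a by apply: contraTneq ea => <-; rewrite eb0.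
by rewrite (negbTE ba) cb eb0.
Qed.

Variable w : seq A.
Implicit Types (nu : valuation) (e : A -> nat).

Lemma sat_ILtd nu c c' : sat_inv w nu (ILtd c c') <-> ltd d (nu c) (nu c').
Proof. by rewrite /ILtd /ltd; case: d. Qed.

Lemma sat_IBetweend nu a c c' :
  sat_inv w nu (IBetweend a c c') <-> 0 < count_dir w d a (nu c) (nu c').
Proof.
by rewrite /IBetweend /count_dir; case: d; exact: rwP (count_betweenP _ _ _ _).
Qed.

Lemma sat_INoWatched nu e c c' : sat_inv w nu (INoWatched e c c') <->
  forall a, watched e a -> count_dir w d a (nu c) (nu c') = 0.
Proof.
rewrite sat_IAnds; split=> H a.
  move=> Wa; apply/eqP; rewrite -leqn0 leqNgt; apply/negP => /sat_IBetweend Hb.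
  by apply: (H a _ Hb); rewrite mem_filter Wa mem_enum.
by rewrite mem_filter mem_enum andbT => /H Ha /sat_IBetweend; rewrite Ha.
Qed.

Lemma sat_IStop nu e c :
  sat_inv w nu (IStop e c) <-> (forall a, e a = 0) /\ reachable w e (nu c).
Proof.
rewrite /IStop; case: forallP => [E0|NE]; last first.
  by split=> // -[E0 _]; case: NE => a; rewrite E0.
have {}E0 a : e a = 0 by apply/eqP.
have Hf cnt : fulfils e cnt <-> forall a, watched e a -> cnt a = 0.
  rewrite /fulfils /watched; split=> H a; have := H a; rewrite E0 /=.
    by case: (capped a) => //= /eqP.
  by case: (capped a) => //= ->.
rewrite sat_IEx; split=> [[j [Hj]]|[_ [j [Hj ij Hb /Hf HW]]]].
  rewrite !sat_IAnd sat_ILtd sat_INoWatched sat_IAt upd_eq updNv.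
  by move=> [ij [HW [_ Hb]]]; split=> //; exists j; split=> //; apply/Hf.
exists j; split=> //.
by rewrite !sat_IAnd sat_ILtd sat_INoWatched sat_IAt upd_eq updNv.
Qed.

Lemma reachable_step e i q a : ltd d i q -> onth w q = Some a -> 0 < e a ->
  (forall b, watched e b -> count_dir w d b i q = 0) ->
  reachable w (decr e a) q -> reachable w e i.
Proof.
move=> iq wq ea HW [j [Hj qj Hb Hf]]; exists j; split=> //.
  exact: ltd_trans qj.
apply/(fulfils_decr ea _).2: Hf => b Wb.
by rewrite (count_dir_split _ _ iq qj) HW // wq /= eq_sym.
Qed.

Lemma reachable_next e i : reachable w e i -> (forall a, e a = 0) \/
  exists a q, [/\ 0 < e a, ltd d i q, onth w q = Some a,
    forall b, watched e b -> count_dir w d b i q = 0 & reachable w (decr e a) q].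
Proof.
move=> [j [Hj ij Hb Hf]].
pose P z := if onth w z is Some b then watched e b else false.
have none_between q b : (forall z, ltd d i z -> ltd d z q -> ~~ P z) ->
    watched e b -> count_dir w d b i q = 0.
  move=> Hn Wb; apply/eqP; rewrite -leqn0 leqNgt; apply/negP.
  by move=> /count_dirP[z [iz zq wz]]; have := Hn z iz zq; rewrite /P wz Wb.
case: (classic (exists z, [&& ltd d i z, ltd d z j & P z])) => [ex|nex].
  right; have [q [iq qj Pq Hn]] := ltd_nearest ex.
  move: Pq; rewrite /P; case wq: (onth w q) => [a|] // Wa.
  have HW := none_between q _ Hn.
  have Hsplit b : watched e b ->
      count_dir w d b i j = (b == a) + count_dir w d b q j.
    by move=> Wb; rewrite (count_dir_split _ _ iq qj) HW // wq /= eq_sym.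
  have ea : 0 < e a.
    case: (posnP (e a)) => // ea0; have := Hf a; rewrite Hsplit // eqxx ea0.
    by move: Wa; rewrite /watched ea0 /= => /negbTE ->.
  exists a, q; split=> //; exists j; split=> //.
  exact/(fulfils_decr ea Hsplit).1.
left=> b; have := Hf b; case: (boolP (watched e b)) => [Wb|].
  rewrite none_between // => [|z iz zj].
    by case: (capped b) => [|/eqP]; lia.
  by apply/negP => Pz; apply: nex; exists z; rewrite iz zj Pz.
by rewrite /watched negb_or lt0n negbK => /andP[/eqP].
Qed.

Lemma sat_IWalk n e c nu : \sum_b e b <= n ->
  sat_inv w nu (IWalk n e c) <-> reachable w e (nu c).
Proof.
elim: n e c nu => [|n IH] e c nu Hn.
  rewrite sat_IStop; split=> [[]//|He]; split=> // a; apply/eqP.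
  by rewrite -leqn0; apply: leq_trans Hn; rewrite (bigD1 a) //= leq_addr.
have Hdecr a : 0 < e a -> \sum_b decr e a b <= n by move=> /sum_decr; lia.
rewrite [IWalk _ _ _]/= sat_IOr sat_IStop sat_IOrs; split.
  move=> [[_ //]|[a]]; rewrite mem_filter mem_enum andbT => ea.
  rewrite sat_IEx => -[q [_]].
  rewrite !sat_IAnd sat_ILtd sat_INoWatched (IH _ _ _ (Hdecr _ ea)) /=.
  rewrite !upd_eq !updNv => -[iq [wq [HW Hr]]].
  exact: reachable_step iq wq ea HW Hr.
move=> Hr; case: (reachable_next Hr) => [E0|[a [q [ea iq wq HW {}Hr]]]].
  by left.
right; exists a; first by rewrite mem_filter mem_enum ea.
apply/sat_IEx; exists q; split; first exact: onth_size wq.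
rewrite !sat_IAnd sat_ILtd sat_INoWatched (IH _ _ _ (Hdecr _ ea)) /=.
by rewrite !upd_eq !updNv.
Qed.

End Walk.

Inductive mix (A : Type) : Type :=
  | MConst of bool
  | MAt of fo2inv A & var
  | MEq of var & var
  | MLt of var & var
  | MThr of A & nat & var & var
  | MNot of mix A
  | MOr of mix A & mix A.

Fixpoint msat {A : eqType} (w : seq A) (nu : valuation) (m : mix A) : Prop :=
  match m with
  | MConst b => b
  | MAt f u => sat_inv w (fun=> nu u) f
  | MEq u v => nu u = nu v
  | MLt u v => nu u < nu v
  | MThr a k u v => nu u < nu v /\ k <= count_between w a (nu u) (nu v)
  | MNot m => ~ msat w nu m
  | MOr m1 m2 => msat w nu m1 \/ msat w nu m2
  end.

Fixpoint num_at {A} (m : mix A) : nat :=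
  match m with
  | MAt _ _ => 1
  | MNot m => num_at m
  | MOr m1 m2 => num_at m1 + num_at m2
  | _ => 0
  end.

Fixpoint max_thr {A} (m : mix A) : nat :=
  match m with
  | MThr _ k _ _ => k
  | MNot m => max_thr m
  | MOr m1 m2 => maxn (max_thr m1) (max_thr m2)
  | _ => 0
  end.

Lemma var_cases (u v : var) : u = v \/ u = ~~ v.
Proof. by case: u; case: v; auto. Qed.

Lemma eq_msat (A : eqType) (w : seq A) (m : mix A) nu nu' :
  nu =1 nu' -> msat w nu m <-> msat w nu' m.
Proof.
by move=> E; elim: m => [b|f u|u v|u v|a k u v|m IH|m1 IH1 m2 IH2] /=;
  rewrite ?E //; tauto.
Qed.

Definition shannon_split {A : eqType} (f : fo2inv A) u (m m1 m0 : mix A) :=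
  forall (w : seq A) (nu : valuation),
    (sat_inv w (fun=> nu u) f -> (msat w nu m <-> msat w nu m1)) /\
    (~ sat_inv w (fun=> nu u) f -> (msat w nu m <-> msat w nu m0)).

Lemma mix_shannon (A : eqType) (m : mix A) : 0 < num_at m -> exists f u m1 m0,
  [/\ num_at m1 < num_at m, num_at m0 < num_at m & shannon_split f u m m1 m0].
Proof.
elim: m => [b|f u|u v|u v|a k u v|m IH|m1 IH1 m2 IH2] //=.
- by move=> _; exists f, u, (MConst _ true), (MConst _ false).
- move=> /IH[f [u [n1 [n0 [lt1 lt0 H]]]]].
  exists f, u, (MNot n1), (MNot n0); split=> // w nu /=.
  by have := H w nu; tauto.
- case: (posnP (num_at m1)) => [z1|p1] Hp.
    have /IH2[f [u [n1 [n0 [lt1 lt0 H]]]]] : 0 < num_at m2 by rewrite z1 in Hp.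
    exists f, u, (MOr m1 n1), (MOr m1 n0); split=> /= [||w nu /=]; try lia.
    by have := H w nu; tauto.
  have [f [u [n1 [n0 [lt1 lt0 H]]]]] := IH1 p1.
  exists f, u, (MOr n1 m2), (MOr n0 m2); split=> /= [||w nu /=]; try lia.
  by have := H w nu; tauto.
Qed.

Definition cmp (i j : nat) : option bool := if i == j then None else Some (i < j).

Lemma cmp_None i j : (cmp i j == None) = (i == j).
Proof. by rewrite /cmp; case: (i == j). Qed.

Lemma cmp_Some i j d : (cmp i j == Some d) = ltd d i j.
Proof. by rewrite /cmp /ltd; case: ltngtP; case: d. Qed.

Definition profile {A : eqType} (w : seq A) K i j a : nat :=
  minn (count_dir w (i < j) a i j) K.

Lemma profile_self {A : eqType} (w : seq A) K i : profile w K i i =1 fun=> 0.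
Proof.
by move=> a; rewrite /profile ltnn /count_dir count_between_self min0n.
Qed.

(* [o] compares i := nu (~~ v) with j := nu v: [None] if i = j, [Some d] if
   [ltd d i j].  For distinct u, u', [MLt u u'] thus holds iff
   [o = Some (u != v)]. *)
Fixpoint eval_mix {A} (m : mix A) (v : var) (o : option bool) (p : A -> nat) :
    bool :=
  match m with
  | MConst b => b
  | MAt _ _ => false
  | MEq u u' => (u == u') || (o == None)
  | MLt u u' => (u != u') && (o == Some (u != v))
  | MThr a k u u' => [&& u != u', o == Some (u != v) & k <= p a]
  | MNot m => ~~ eval_mix m v o p
  | MOr m1 m2 => eval_mix m1 v o p || eval_mix m2 v o p
  end.

Lemma eq_eval_mix {A} (m : mix A) v o p p' : p =1 p' ->
  eval_mix m v o p = eval_mix m v o p'.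
Proof. by move=> E; elim: m => //= [a k u u'|m ->|m1 -> m2 ->]; rewrite ?E. Qed.

Lemma msat_eval_mix (A : eqType) (w : seq A) nu v j (m : mix A) K :
  num_at m = 0 -> max_thr m <= K ->
  msat w (upd nu v j) m <->
  eval_mix m v (cmp (nu (~~ v)) j) (profile w K (nu (~~ v)) j).
Proof.
have vNv : (v == ~~ v) = false by case: v.
have Nvv : (~~ v == v) = false by case: v {vNv}.
set i := nu (~~ v).
elim: m => [b|f u|u u'|u u'|a k u u'|m IH|m1 IH1 m2 IH2] //= Hn HK.
- case: (var_cases u v) => Eu; case: (var_cases u' v) => Eu'; rewrite Eu Eu';
    rewrite ?upd_eq ?updN ?eqxx ?vNv ?Nvv /= ?cmp_None -/i;
    split=> H; first [done | by rewrite H eqxx | by move/eqP: H => ->].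
- case: (var_cases u v) => Eu; case: (var_cases u' v) => Eu'; rewrite Eu Eu';
    rewrite ?upd_eq ?updN ?eqxx ?vNv ?Nvv /= ?cmp_Some -/i ?ltnn;
    by split.
- rewrite /profile leq_min HK andbT /count_dir.
  case: (var_cases u v) => Eu; case: (var_cases u' v) => Eu'; rewrite Eu Eu';
    rewrite ?upd_eq ?updN ?eqxx ?vNv ?Nvv /= ?cmp_Some -/i ?ltnn /=;
    first [by split=> [[]|] | by case: (ltngtP i j) => _ //=; split=> [[]|]].
- by rewrite (IH Hn HK); split=> /negP.
- move: Hn HK; rewrite geq_max => /eqP; rewrite addn_eq0.
  move=> /andP[/eqP n1 /eqP n2] /andP[k1 k2]; rewrite (IH1 n1 k1) (IH2 n2 k2).
  by split=> [[]->|/orP[]]; rewrite ?orbT; auto.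
Qed.

Lemma eq_minn_capped c e K : e <= K ->
  minn c K = e <-> (if e == K then e <= c else c == e).
Proof. by move=> eK; case: eqVneq => [->|ne]; split; lia. Qed.

Section Elimination.
Variable A : finType.

Definition ex_mix (w : seq A) nu v beta (m : mix A) :=
  exists j, [/\ j < size w, sat_inv w (fun=> j) beta & msat w (upd nu v j) m].

Definition ex_mix_definable (m : mix A) v beta :=
  exists F : fo2inv A, forall w nu,
    nu (~~ v) < size w -> sat_inv w nu F <-> ex_mix w nu v beta m.

Definition IReach v beta K (o : option bool) (g : A -> nat) : fo2inv A :=
  if o is Some d then IWalk (fun a => g a == K) beta d (\sum_b g b) g (~~ v)
  else if [forall a, g a == 0] then IAt (~~ v) beta else IFalse A.

Lemma sat_IReach w nu v beta K o g : (forall a, g a <= K) -> nu (~~ v) < size w ->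
  sat_inv w nu (IReach v beta K o g) <->
  exists j, [/\ j < size w, sat_inv w (fun=> j) beta, cmp (nu (~~ v)) j = o &
                profile w K (nu (~~ v)) j =1 g].
Proof.
move=> gK iw; set i := nu (~~ v); case: o => [d|] /=.
  rewrite sat_IWalk //.
  have Hp j : ltd d i j -> profile w K i j =1 g <->
      fulfils (fun a => g a == K) g (fun a => count_dir w d a i j).
    move=> ij; rewrite /profile.
    have -> : (i < j) = d by move: ij; rewrite /ltd; case: d; lia.
    by split=> H a; apply/eq_minn_capped => //; apply: H.
  split=> [[j [Hj ij Hb Hf]]|[j [Hj Hb /eqP]]].
    by exists j; split=> //; [apply/eqP; rewrite cmp_Some | apply/Hp].
  by rewrite cmp_Some => ij Hf; exists j; split=> //; apply/Hp.
case: forallP => [G0|NG].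
  rewrite sat_IAt; split=> [[_ Hb]|[j [Hj Hb /eqP]]].
    exists i; split=> //; first by rewrite /cmp eqxx.
    by move=> a; rewrite profile_self; apply/esym/eqP.
  by rewrite cmp_None -/i => /eqP-> _.
split=> // -[j [_ _ /eqP]]; rewrite cmp_None => /eqP <-.
by move=> Hp; case: NG => a; rewrite -Hp profile_self.
Qed.

Definition IExistsCore (m : mix A) (v : var) (beta : fo2inv A) : fo2inv A :=
  let K := max_thr m in
  IOrs (enum {: option bool}) (fun o =>
    IOrs [seq g : {ffun A -> 'I_K.+1} <- enum {: {ffun A -> 'I_K.+1}}
           | eval_mix m v o (fun a => g a)]
      (fun g => IReach v beta K o (fun a => g a))).

Lemma sat_IExistsCore w nu (m : mix A) v beta :
  num_at m = 0 -> nu (~~ v) < size w ->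
  sat_inv w nu (IExistsCore m v beta) <-> ex_mix w nu v beta m.
Proof.
move=> m0 iw; rewrite sat_IOrs; split.
  move=> [o _ /sat_IOrs[g]]; rewrite mem_filter mem_enum andbT => Hm.
  have gK a : g a <= max_thr m by rewrite -ltnS.
  move/(sat_IReach _ _ gK iw) => [j [Hj Hb Ho Hp]].
  exists j; split=> //; apply/(msat_eval_mix _ _ _ _ m0 (leqnn _)).
  by rewrite Ho (eq_eval_mix _ _ _ Hp).
move=> [j [Hj Hb /(msat_eval_mix _ _ _ _ m0 (leqnn _)) Hm]].
exists (cmp (nu (~~ v)) j); first by rewrite mem_enum.
pose g : {ffun A -> 'I_(max_thr m).+1} :=
  [ffun a => inord (profile w (max_thr m) (nu (~~ v)) j a)].
have Hg : (fun a => nat_of_ord (g a)) =1 profile w (max_thr m) (nu (~~ v)) j.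
  by move=> a; rewrite /g ffunE inordK // ltnS geq_minr.
apply/sat_IOrs; exists g.
  by rewrite mem_filter mem_enum andbT (eq_eval_mix _ _ _ Hg).
by apply/sat_IReach => //; [move=> a; rewrite -ltnS | exists j; split].
Qed.

Lemma ex_mix_split_bound f v beta (m m1 m0 : mix A) :
  shannon_split f v m m1 m0 ->
  ex_mix_definable m1 v (IAnd beta f) ->
  ex_mix_definable m0 v (IAnd beta (INot f)) ->
  ex_mix_definable m v beta.
Proof.
move=> Hsh [F1 HF1] [F0 HF0].
exists (IOr F1 F0) => w nu iw; rewrite sat_IOr HF1 // HF0 //.
have Hv j : sat_inv w (fun=> upd nu v j v) f <-> sat_inv w (fun=> j) f.
  by apply: eq_sat_inv => ?; rewrite upd_eq.
split=> [[]|] [j [Hj Hb Hm]].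
- move/sat_IAnd: Hb => [Hb /Hv Hf]; exists j; split=> //.
  exact/((Hsh w _).1 Hf).
- move/sat_IAnd: Hb => [Hb Hf]; have {}Hf : ~ sat_inv w (fun=> upd nu v j v) f.
    by move/Hv.
  by exists j; split=> //; apply/((Hsh w _).2 Hf).
case: (classic (sat_inv w (fun=> upd nu v j v) f)) => Hf.
  left; exists j; split=> //; first by apply/sat_IAnd; split=> //; apply/Hv.
  exact/((Hsh w _).1 Hf).
right; exists j; split=> //; first by apply/sat_IAnd; split=> // /Hv.
exact/((Hsh w _).2 Hf).
Qed.

Lemma ex_mix_split_free f v beta (m m1 m0 : mix A) :
  shannon_split f (~~ v) m m1 m0 ->
  ex_mix_definable m1 v beta -> ex_mix_definable m0 v beta ->
  ex_mix_definable m v beta.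
Proof.
move=> Hsh [F1 HF1] [F0 HF0].
exists (IOr (IAnd (IAt (~~ v) f) F1) (IAnd (INot (IAt (~~ v) f)) F0)) => w nu iw.
have Hf : sat_inv w nu (IAt (~~ v) f) <-> sat_inv w (fun=> nu (~~ v)) f.
  by rewrite sat_IAt; tauto.
have Ex m' : (forall j, msat w (upd nu v j) m <-> msat w (upd nu v j) m') ->
    ex_mix w nu v beta m <-> ex_mix w nu v beta m'.
  by move=> E; split=> -[j [Hj Hb /E Hm]]; exists j.
rewrite sat_IOr !sat_IAnd sat_INot Hf HF1 // HF0 //.
case: (classic (sat_inv w (fun=> nu (~~ v)) f)) => B.
  rewrite (Ex m1) => [|j]; first tauto.
  by apply: (Hsh w _).1; rewrite updN.
rewrite (Ex m0) => [|j]; first tauto.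
by apply: (Hsh w _).2; rewrite updN.
Qed.

Lemma mix_ex_definable (m : mix A) v beta : ex_mix_definable m v beta.
Proof.
have [n] := ubnP (num_at m); elim: n m beta => // n IH m beta /ltnSE mn.
case: (posnP (num_at m)) => [m0|mpos].
  by exists (IExistsCore m v beta) => w nu; apply: sat_IExistsCore.
have [f [u [m1 [m0 [lt1 lt0 Hsh]]]]] := mix_shannon mpos.
have {}lt1 := leq_trans lt1 mn; have {}lt0 := leq_trans lt0 mn.
case: (var_cases u v) => Eu; subst u.
  by apply: (ex_mix_split_bound Hsh); apply: IH.
by apply: (ex_mix_split_free Hsh); apply: IH.
Qed.

End Elimination.

Lemma mix_of_th (A : finType) (g : fo2th A) : exists m : mix A, forall w nu,
  (forall u, nu u < size w) -> sat_th w nu g <-> msat w nu m.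
Proof.
elim: g => [|u v|u v|a u|a k u v|g [m IH]|g [m1 IH1] h [m2 IH2]|v g [m IH]].
- by exists (MConst _ false).
- by exists (MEq _ u v).
- by exists (MLt _ u v).
- by exists (MAt (ILetter a false) u).
- by exists (MThr a k u v).
- by exists (MNot m) => w nu R /=; have := IH w nu R; tauto.
- exists (MOr m1 m2) => w nu R /=.
  by have := IH1 w nu R; have := IH2 w nu R; tauto.
have [f Hf] := mix_ex_definable m v ITrue.
exists (MAt f (~~ v)) => w nu R /=; rewrite (Hf w (fun=> nu (~~ v)) (R _)).
have E i : upd (fun=> nu (~~ v)) v i =1 upd nu v i.
  by move=> u; rewrite /upd; case: u; case: v {Hf}.
have R' i : i < size w -> forall u, upd nu v i u < size w.
  by move=> Hi u; rewrite /upd; case: (u == v).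
split=> -[i [Hi H]]; exists i; split=> //.
  by apply/(eq_msat _ _ (E i))/(IH _ _ (R' i Hi)).
by apply/(IH _ _ (R' i Hi))/(eq_msat _ _ (E i)).
Qed.

Definition INonEmpty {A} : fo2inv A := IEx false ITrue.
Definition IFirst {A} (c : var) : fo2inv A := INot (IEx (~~ c) (ILt A (~~ c) c)).

Lemma sat_INonEmpty (A : eqType) (w : seq A) nu :
  sat_inv w nu INonEmpty <-> 0 < size w.
Proof.
rewrite /INonEmpty sat_IEx.
by split=> [[i [Hi _]]|w0]; [lia | exists 0; split=> // -[]].
Qed.

Lemma sat_IFirst (A : eqType) (w : seq A) nu c : 0 < size w ->
  sat_inv w nu (IFirst c) <-> nu c = 0.
Proof.
move=> w0; split=> [H|c0 [i [_]]]; last by rewrite upd_eq updNv c0.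
apply/eqP; rewrite -leqn0 leqNgt; apply/negP => c0; apply: H.
by exists 0; split=> //; rewrite upd_eq updNv.
Qed.

Lemma inv_definable_nonempty (A : finType) (L : seq A -> Prop) (f : fo2inv A) :
  sentence_inv f -> (forall w, 0 < size w -> L w <-> sat_inv w nu0 f) ->
  inv_definable L.
Proof.
move=> Sf Hf; case: (classic (L [::])) => L0.
  exists (IOr (INot INonEmpty) f); split=> [v|w]; first by rewrite /= Sf andbF.
  rewrite sat_IOr sat_INot sat_INonEmpty.
  case: (posnP (size w)) => [/size0nil->|w0]; first by split=> // _; left.
  by rewrite -Hf //; split=> [Lw|[/(_ isT)[]|//]]; right.
exists (IAnd INonEmpty f); split=> [v|w]; first by rewrite /= Sf andbF.
rewrite sat_IAnd sat_INonEmpty.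
case: (posnP (size w)) => [/size0nil->|w0]; first by split=> [|[]].
by rewrite -Hf //; split=> [|[]].
Qed.

Lemma th_to_inv (A : finType) (L : seq A -> Prop) :
  th_definable L -> inv_definable L.
Proof.
move=> [g [_ HL]]; have [m Hm] := mix_of_th g.
have [F HF] := mix_ex_definable m true (IFirst false).
(* [nu0] puts both variables at position 0, so x and the witness y of F are
   pinned there by [IFirst]; the outer quantifier only closes the formula. *)
pose Phi := IEx true (IEx false (IAnd (IFirst false) F)).
apply: (inv_definable_nonempty (f := Phi)).
  by case.
move=> w w0; rewrite HL (Hm w nu0 (fun=> w0)).
have HF0 nu : nu false = 0 -> sat_inv w nu F <-> msat w nu0 m.
  move=> nu0f; rewrite HF ?nu0f //.
  have E : upd nu true 0 =1 nu0 by case; rewrite /upd /= ?nu0f.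
  split=> [[j [_ /(sat_IFirst _ _ w0) j0]]|Hm0].
    by rewrite j0 (eq_msat _ _ E).
  by exists 0; split=> //; [exact/(sat_IFirst _ _ w0) | apply/(eq_msat _ _ E)].
rewrite sat_IEx; split=> [Hm0|[y [_ /sat_IEx[x [_]]]]].
  exists 0; split=> //; apply/sat_IEx; exists 0; split=> //; apply/sat_IAnd.
  by split; [exact/(sat_IFirst _ _ w0) | exact/HF0].
by move=> /sat_IAnd[/(sat_IFirst _ _ w0) x0 /(HF0 _ x0)].
Qed.

Fixpoint th_of_inv {A} (f : fo2inv A) : fo2th A :=
  match f with
  | IFalse => TFalse _
  | IEq u v => TEq _ u v
  | ILt u v => TLt _ u v
  | ILetter a u => TLetter a u
  | IBetween a u v => TThr a 1 u v
  | INot g => TNot (th_of_inv g)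
  | IOr g h => TOr (th_of_inv g) (th_of_inv h)
  | IEx v g => TEx v (th_of_inv g)
  end.

Lemma free_th_of_inv {A} (f : fo2inv A) v :
  free_th (th_of_inv f) v = free_inv f v.
Proof.
by elim: f => [|||||g IH|g IHg h IHh|u g IH] //=; rewrite ?IH ?IHg ?IHh.
Qed.

Lemma sat_th_of_inv (A : eqType) (w : seq A) (f : fo2inv A) nu :
  sat_th w nu (th_of_inv f) <-> sat_inv w nu f.
Proof.
elim: f nu => [||||a u v|g IH|g IHg h IHh|u g IH] nu //=.
- split=> [[_ /count_betweenP]|[z [/andP[uz zv] Hz]]] //.
  split; first exact: ltn_trans uz zv.
  by apply/count_betweenP; exists z; rewrite uz zv.
- by have := IH nu; tauto.
- by have := IHg nu; have := IHh nu; tauto.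
- by split=> -[i [Hi /IH H]]; exists i.
Qed.

Lemma inv_to_th (A : finType) (L : seq A -> Prop) :
  inv_definable L -> th_definable L.
Proof.
move=> [f [Sf HL]]; exists (th_of_inv f); split=> [v|w].
  by rewrite free_th_of_inv.
by rewrite sat_th_of_inv.
Qed.

Theorem theorem1 (A : finType) (L : seq A -> Prop) :
  inv_definable L <-> th_definable L.
Proof. by split; [exact: inv_to_th | exact: th_to_inv]. Qed.
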